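(* Let $T$ be a positive integer, $(\Omega,\mathcal{F},P)$ a probability space, $\mathbb{F}=(\mathcal{F}_t)_{t=0}^T$, $\mathbb{G}=(\mathcal{G}_t)_{t=0}^T$ filtrations with $\mathcal{G}_t\subseteq\mathcal{F}_t$, and $X^1,X^2,Y^1,Y^2$ real-valued $\mathbb{F}$-adapted processes indexed by $\{0,\dots,T\}$ with $E(\max_{0\le t\le T}|S_t|)<\infty$ for each $S\in\{X^1,X^2,Y^1,Y^2\}$, where $X^2,Y^2$ are moreover $\mathbb{G}$-adapted. Let $\Gamma$ be the game in which Player 1 chooses $\tau\in\mathcal{T}(\mathbb{F})$, Player 2 chooses $\nu\in\mathcal{T}(\mathbb{G})$, with expected utilities \[J_1(\tau,\nu)=E\left[X^1_\tau\mathbf{1}_{\{\tau\le\nu\}}+Y^1_\nu\mathbf{1}_{\{\tau>\nu\}}\right],\qquad J_2(\tau,\nu)=E\left[X^2_\nu\mathbf{1}_{\{\nu<\tau\}}+Y^2_\tau\mathbf{1}_{\{\tau\le\nu\}}\right].\] Assume $X^1_t\ge Y^1_t$ for every $0\le t\le T$, $P$-a.s. Let $\epsilon>0$ and let $\Gamma_\epsilon$ be identical to $\Gamma$ except that the expected utility of Player 1 is \[J_{1,\epsilon}(\tau,\nu)=E\left[(X^1_\tau+\epsilon)\mathbf{1}_{\{\tau\le\nu\}}+Y^1_\nu\mathbf{1}_{\{\tau>\nu\}}\right].\] If $(\tau_0,\nu_0)\in\mathcal{T}(\mathbb{F})\times\mathcal{T}(\mathbb{G})$ is a pure-strategy Nash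 equilibrium in $\Gamma_\epsilon$, then it is also a pure-strategy Nash equilibrium in $\Gamma$.
   Context: Time is discrete in $\{0,\dots,T\}$. For a filtration $\mathbb{H}$, $\mathcal{T}(\mathbb{H})$ is the set of $\mathbb{H}$-stopping times with values in $\{0,\dots,T\}$. A pair $(\tau^*,\nu^* )\in\mathcal{T}(\mathbb{F})\times\mathcal{T}(\mathbb{G})$ is a pure-strategy Nash equilibrium of a game with utilities $(U_1,U_2)$ if $U_1(\tau,\nu^* )\le U_1(\tau^*,\nu^* )$ for all $\tau\in\mathcal{T}(\mathbb{F})$ and $U_2(\tau^*,\nu)\le U_2(\tau^*,\nu^* )$ for all $\nu\in\mathcal{T}(\mathbb{G})$. *)

From mathcomp Require Import all_boot all_order all_algebra.
From mathcomp Require Import all_classical all_reals all_analysis.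
Set Implicit Arguments. Unset Strict Implicit. Unset Printing Implicit Defensive.
Import Order.TTheory GRing.Theory Num.Theory.
Local Open Scope classical_set_scope.
Local Open Scope ring_scope.

Section Defs.
Context {d : measure_display} {Omega : measurableType d} {R : realType}.

Definition is_filtration (T : nat) (F : nat -> set (set Omega)) : Prop :=
  (forall t, (t <= T)%N -> sigma_algebra setT (F t)) /\
  (forall t, (t <= T)%N -> F t `<=` measurable) /\
  (forall s t, (s <= t)%N -> (t <= T)%N -> F s `<=` F t).

Definition stopping_time (T : nat) (H : nat -> set (set Omega))
    (tau : Omega -> nat) : Prop :=
  (forall w, (tau w <= T)%N) /\
  (forall t, (t <= T)%N -> H t [set w | (tau w <= t)%N]).

Definition adapted (T : nat) (H : nat -> set (set Omega))
    (X : nat -> Omega -> R) : Prop :=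
  forall t, (t <= T)%N -> forall B : set R, measurable B -> H t (X t @^-1` B).

Definition integrable_max (P : probability Omega R) (T : nat)
    (X : nat -> Omega -> R) : Prop :=
  P.-integrable setT (fun w => (\big[Num.max/0]_(t < T.+1) `|X t w|)%:E).

Definition nash_eq (S1 S2 : (Omega -> nat) -> Prop)
    (U1 U2 : (Omega -> nat) -> (Omega -> nat) -> \bar R)
    (tau0 nu0 : Omega -> nat) : Prop :=
  S1 tau0 /\ S2 nu0 /\
  (forall tau, S1 tau -> (U1 tau nu0 <= U1 tau0 nu0)%E) /\
  (forall nu, S2 nu -> (U2 tau0 nu <= U2 tau0 nu0)%E).

(* J_1^eps(tau,nu) = E[(X1_tau + eps) 1_{tau<=nu} + Y1_nu 1_{tau>nu}];
   eps = 0 gives J_1. *)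
Definition J1 (P : probability Omega R) (X1 Y1 : nat -> Omega -> R) (eps : R)
    (tau nu : Omega -> nat) : \bar R :=
  (\int[P]_w ((if (tau w <= nu w)%N then X1 (tau w) w + eps else 0)
              + (if (nu w < tau w)%N then Y1 (nu w) w else 0))%:E)%E.

Definition J2 (P : probability Omega R) (X2 Y2 : nat -> Omega -> R)
    (tau nu : Omega -> nat) : \bar R :=
  (\int[P]_w ((if (nu w < tau w)%N then X2 (nu w) w else 0)
              + (if (tau w <= nu w)%N then Y2 (tau w) w else 0))%:E)%E.

End Defs.

From mathcomp Require Import all_boot all_order all_algebra.
From mathcomp Require Import all_classical all_reals all_analysis.
From mathcomp Require Import lra.
Set Implicit Arguments. Unset Strict Implicit. Unset Printing Implicit Defensive.
Import Order.TTheory GRing.Theory Num.Theory.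
Local Open Scope classical_set_scope.
Local Open Scope ring_scope.

(* Given [tau], Player 1 does at least as well with [tau' := minn tau nu0]: where
   [nu0 < tau] the outcome [Y1_nu0] becomes [X1_nu0 >= Y1_nu0].  Since [tau' <= nu0],
   the bonus [eps] is collected surely, [J1eps(tau', nu0) = J1(tau', nu0) + eps],
   while always [J1eps <= J1 + eps].  Hence
   [J1(tau, nu0) + eps <= J1eps(tau', nu0) <= J1eps(tau0, nu0) <= J1(tau0, nu0) + eps]. *)

Lemma sigma_algebraU (T : Type) (D : set T) (G : set (set T)) (A B : set T) :
  sigma_algebra D G -> G A -> G B -> G (A `|` B).
Proof.
by move=> [G0 _ GU] GA GB; rewrite -bigcup2E; apply: GU => -[|[|i]].
Qed.

Section ae_le_integral.
Local Open Scope ereal_scope.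
Context d (T : measurableType d) (R : realType) (mu : {measure set T -> \bar R}).

Lemma ae_le_integral (D : set T) (f g : T -> \bar R) : measurable D ->
  mu.-integrable D f -> mu.-integrable D g ->
  {ae mu, forall x, D x -> f x <= g x} ->
  \int[mu]_(x in D) f x <= \int[mu]_(x in D) g x.
Proof.
move=> mD /integrableP[mf _] /integrableP[mg _] fg.
rewrite integralE [leRHS]integralE; apply: leeB.
- apply: ae_ge0_le_integral => //.
  + exact: measurable_realfun.measurable_funepos.
  + exact: measurable_realfun.measurable_funepos.
  by apply: filterS fg => x fgx Dx; rewrite !funeposE le_max2 ?fgx.
- apply: ae_ge0_le_integral => //.
  + exact: measurable_realfun.measurable_funeneg.
  + exact: measurable_realfun.measurable_funeneg.
  by apply: filterS fg => x fgx Dx; rewrite !funenegE le_max2 ?leeN2 ?fgx.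
Qed.

End ae_le_integral.

Section stopping_times.
Context {d : measure_display} {Omega : measurableType d}.
Variables (T : nat) (F : nat -> set (set Omega)).
Hypothesis hF : is_filtration T F.

Lemma stopping_time_sub (G : nat -> set (set Omega)) (tau : Omega -> nat) :
  (forall t, (t <= T)%N -> G t `<=` F t) ->
  stopping_time T G tau -> stopping_time T F tau.
Proof. by move=> GF [tauT Gtau]; split=> // t tT; apply: GF (Gtau t tT). Qed.

Lemma stopping_time_minn (tau nu : Omega -> nat) :
  stopping_time T F tau -> stopping_time T F nu ->
  stopping_time T F (fun w => minn (tau w) (nu w)).
Proof.
move=> [tauT Ftau] [nuT Fnu]; split=> [w|t tT]; first by rewrite geq_min tauT.
have -> : [set w | (minn (tau w) (nu w) <= t)%N] =
    [set w | (tau w <= t)%N] `|` [set w | (nu w <= t)%N].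
  by apply/seteqP; split=> w /=; rewrite geq_min => /orP.
by case: hF => sF _; apply: sigma_algebraU (sF t tT) (Ftau t tT) (Fnu t tT).
Qed.

Lemma stopping_time_measurable_eq (tau : Omega -> nat) i :
  stopping_time T F tau -> (i <= T)%N -> measurable [set w | tau w = i].
Proof.
move=> [_ Ftau] iT; have [_ [Fmeas _]] := hF.
case: i iT => [|i] iT.
  have -> : [set w | tau w = 0%N] = [set w | (tau w <= 0)%N].
    by apply/seteqP; split=> w /=; rewrite leqn0 => /eqP.
  exact: Fmeas _ iT _ (Ftau _ iT).
have -> : [set w | tau w = i.+1] =
    [set w | (tau w <= i.+1)%N] `\` [set w | (tau w <= i)%N].
  apply/seteqP; split=> w /=; first by move=> ->; rewrite leqnn ltnn.
  by move=> [h1 /negP]; rewrite -ltnNge => h2; apply/eqP; rewrite eqn_leq h1.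
by apply: measurableD; [apply: Fmeas iT _ (Ftau _ iT) |
  apply: Fmeas (ltnW iT) _ (Ftau _ (ltnW iT))].
Qed.

Lemma adapted_measurable {R : realType} (X : nat -> Omega -> R) t :
  adapted T F X -> (t <= T)%N -> measurable_fun setT (X t).
Proof.
move=> aX tT _ B mB; rewrite setTI; have [_ [Fmeas _]] := hF.
exact: Fmeas t tT _ (aX t tT B mB).
Qed.

Lemma measurable_fun_stopped d' (U : measurableType d')
    (k : nat -> Omega -> U) (tau : Omega -> nat) :
  stopping_time T F tau -> (forall i, (i <= T)%N -> measurable_fun setT (k i)) ->
  measurable_fun setT (fun w => k (tau w) w).
Proof.
move=> st mk _ B mB; rewrite setTI.
have -> : (fun w => k (tau w) w) @^-1` B = \bigcup_i
    (if (i <= T)%N then [set w | tau w = i] `&` k i @^-1` B else set0).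
  apply/seteqP; split=> w /=; last by move=> [i _]; case: ifP => // _ [/= <-].
  by move=> Bw; exists (tau w) => //; rewrite (proj1 st).
apply: bigcupT_measurable => i; case: ifPn => // iT.
apply: measurableI; first exact: stopping_time_measurable_eq.
by rewrite -[_ @^-1` _]setTI; apply: mk.
Qed.

End stopping_times.

Section payoff.
Context {d : measure_display} {Omega : measurableType d} {R : realType}.
Implicit Types (X Y : nat -> Omega -> R) (tau nu : Omega -> nat).

Definition payoff1 X Y (e : R) (i j : nat) (w : Omega) : R :=
  (if (i <= j)%N then X i w + e else 0) + (if (j < i)%N then Y j w else 0).

Lemma J1E (P : probability Omega R) X Y e tau nu :
  J1 P X Y e tau nu = (\int[P]_w (payoff1 X Y e (tau w) (nu w) w)%:E)%E.
Proof. by []. Qed.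

Lemma payoff1_le_minn X Y (i j : nat) w : Y j w <= X j w ->
  payoff1 X Y 0 i j w <= payoff1 X Y 0 (minn i j) j w.
Proof.
rewrite /payoff1; case: (leqP i j) => [ij | ji]; first by rewrite ij ltnNge ij.
by rewrite leqnn ltnn /= => YX; lra.
Qed.

Definition maxabs X (T : nat) (w : Omega) : R := \big[Num.max/0]_(t < T.+1) `|X t w|.

Lemma normr_le_maxabs X (T t : nat) w : (t <= T)%N -> `|X t w| <= maxabs X T w.
Proof.
by rewrite -ltnS => tT; exact: (le_bigmax 0 (fun t : 'I_T.+1 => `|X t w|) (Ordinal tT)).
Qed.

Lemma payoff1_bound X Y e (T i j : nat) w : (i <= T)%N -> (j <= T)%N ->
  `|payoff1 X Y e i j w| <= maxabs X T w + maxabs Y T w + `|e|.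
Proof.
move=> iT jT.
have Xi := normr_le_maxabs X w iT; have Yj := normr_le_maxabs Y w jT.
have X0 := le_trans (normr_ge0 _) (normr_le_maxabs X w (leq0n T)).
have Y0 := le_trans (normr_ge0 _) (normr_le_maxabs Y w (leq0n T)).
have Xe := ler_normD (X i w) e; have e0 := normr_ge0 e.
rewrite /payoff1; case: ifP => _; case: ifP => _;
  apply: le_trans (ler_normD _ _) _; rewrite ?normr0; lra.
Qed.

End payoff.

Section expected_payoff.
Context {d : measure_display} {Omega : measurableType d} {R : realType}.
Variables (P : probability Omega R) (T : nat) (F : nat -> set (set Omega)).
Variables (X Y : nat -> Omega -> R).
Hypotheses (hF : is_filtration T F) (aX : adapted T F X) (aY : adapted T F Y).
Hypotheses (iX : integrable_max P T X) (iY : integrable_max P T Y).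
Implicit Types tau nu : Omega -> nat.

Lemma measurable_payoff1 e tau nu :
  stopping_time T F tau -> stopping_time T F nu ->
  measurable_fun setT (fun w => payoff1 X Y e (tau w) (nu w) w).
Proof.
move=> stau snu.
apply: (measurable_fun_stopped (k := fun i w => payoff1 X Y e i (nu w) w) hF stau).
move=> i iT; apply: (measurable_fun_stopped (k := fun j w => payoff1 X Y e i j w) hF snu).
move=> j jT.
have mX := adapted_measurable hF aX; have mY := adapted_measurable hF aY.
rewrite /payoff1; case: (i <= j)%N; case: (j < i)%N;
  do 2?apply: measurable_realfun.measurable_funD;
  solve [exact: measurable_cst | exact: mX | exact: mY].
Qed.

Lemma integrable_payoff1 e tau nu :
  stopping_time T F tau -> stopping_time T F nu ->
  P.-integrable setT (fun w => (payoff1 X Y e (tau w) (nu w) w)%:E).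
Proof.
move=> stau snu.
have ie := finite_measure_integrable_cst P `|e| (@measurableT _ Omega).
apply: le_integrable (integrableD _ (integrableD _ iX iY) ie) => //.
  exact/measurable_realfun.measurable_EFinP/measurable_payoff1.
move=> w _; rewrite /= lee_fin.
apply: le_trans (payoff1_bound _ _ _ _ (proj1 stau w) (proj1 snu w)) _.
exact: ler_norm.
Qed.

Lemma J1_addE e tau nu :
  stopping_time T F tau -> stopping_time T F nu ->
  (J1 P X Y 0 tau nu + e%:E =
   \int[P]_w ((payoff1 X Y 0 (tau w) (nu w) w)%:E + e%:E))%E.
Proof.
move=> stau snu.
have ie := finite_measure_integrable_cst P e (@measurableT _ Omega).
rewrite integralD //; last exact: integrable_payoff1.
rewrite (integral_cst P measurableT e%:E).
by rewrite -[e%:E in LHS]mule1 -(probability_setT P).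
Qed.

Lemma J1_le_add e tau nu : 0 <= e ->
  stopping_time T F tau -> stopping_time T F nu ->
  (J1 P X Y e tau nu <= J1 P X Y 0 tau nu + e%:E)%E.
Proof.
move=> e0 stau snu; rewrite J1_addE // J1E.
have ie := finite_measure_integrable_cst P e (@measurableT _ Omega).
apply: le_integral => //; first exact: integrable_payoff1.
  by apply: integrableD => //; exact: integrable_payoff1.
move=> w _; rewrite -EFinD lee_fin /payoff1.
by case: ifP => _; case: ifP => _; lra.
Qed.

Lemma J1_eq_add e tau nu :
  stopping_time T F tau -> stopping_time T F nu ->
  (forall w, (tau w <= nu w)%N) ->
  J1 P X Y e tau nu = (J1 P X Y 0 tau nu + e%:E)%E.
Proof.
move=> stau snu taunu; rewrite J1_addE // J1E.
apply: eq_integral => w _; rewrite -EFinD /payoff1 taunu ltnNge taunu /=.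
by congr EFin; lra.
Qed.

Lemma J1_le_minn tau nu :
  (forall t, (t <= T)%N -> {ae P, forall w, Y t w <= X t w}) ->
  stopping_time T F tau -> stopping_time T F nu ->
  (J1 P X Y 0 tau nu <= J1 P X Y 0 (fun w => minn (tau w) (nu w)) nu)%E.
Proof.
move=> YX stau snu.
have {}YX : {ae P, forall w t, (t <= T)%N -> Y t w <= X t w}.
  apply: ae_foralln => t; have [tT | _] := leqP t T.
    by apply: filterS (YX t tT) => w.
  exact: aeW.
rewrite !J1E; apply: ae_le_integral => //.
- exact: integrable_payoff1.
- by apply: integrable_payoff1 => //; exact: stopping_time_minn.
apply: filterS YX => w YXw _; rewrite lee_fin.
exact/payoff1_le_minn/YXw/(proj1 snu).
Qed.

End expected_payoff.

Theorem lemma1 (d : measure_display) (Omega : measurableType d) (R : realType)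
  (P : probability Omega R) (T : nat) (F G : nat -> set (set Omega))
  (X1 X2 Y1 Y2 : nat -> Omega -> R) (eps : R) (tau0 nu0 : Omega -> nat) :
  (0 < T)%N ->
  is_filtration T F -> is_filtration T G ->
  (forall t, (t <= T)%N -> G t `<=` F t) ->
  adapted T F X1 -> adapted T F X2 -> adapted T F Y1 -> adapted T F Y2 ->
  adapted T G X2 -> adapted T G Y2 ->
  integrable_max P T X1 -> integrable_max P T X2 ->
  integrable_max P T Y1 -> integrable_max P T Y2 ->
  (forall t, (t <= T)%N -> {ae P, forall w, Y1 t w <= X1 t w}) ->
  0 < eps ->
  nash_eq (stopping_time T F) (stopping_time T G)
    (J1 P X1 Y1 eps) (J2 P X2 Y2) tau0 nu0 ->
  nash_eq (stopping_time T F) (stopping_time T G)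
    (J1 P X1 Y1 0) (J2 P X2 Y2) tau0 nu0.
Proof.
move=> _ hF _ GF aX1 _ aY1 _ _ _ iX1 _ iY1 _ Y1X1 eps_gt0 [stau0 [snu0 [best1 best2]]].
split=> //; split=> //; split=> // tau stau.
have snu0F := stopping_time_sub GF snu0.
have stau' := stopping_time_minn hF stau snu0F.
rewrite -(@leeD2rE _ eps%:E) //.
apply: le_trans (J1_le_add hF aX1 aY1 iX1 iY1 (ltW eps_gt0) stau0 snu0F).
apply: le_trans (best1 _ stau').
rewrite (J1_eq_add hF aX1 aY1 iX1 iY1 _ stau' snu0F) => [|w]; last exact: geq_minr.
by rewrite leeD2rE //; exact: (J1_le_minn hF aX1 aY1 iX1 iY1 Y1X1 stau snu0F).
Qed.
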